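(* Let $d>k\geq1$ be integers, let $\beta>0$ and $\lambda_k>2\sqrt{\beta}$, and let $A:=\mathrm{diag}(\lambda_k,\dots,\lambda_k,2\sqrt\beta,\dots,2\sqrt\beta)\in\mathbb{R}^{d\times d}$, with $\lambda_k$ repeated $k$ times and $2\sqrt\beta$ repeated $d-k$ times. Let $U_k\in\mathbb{R}^{d\times k}$ be the matrix of the first $k$ standard basis vectors and $U_{-k}\in\mathbb{R}^{d\times(d-k)}$ that of the last $d-k$ standard basis vectors. Let $\varepsilon\in(0,1)$. Then there exist $X_0\in\mathrm{St}(d,k)$ with $\cos\theta_k(U_k,X_0)>0$ and perturbations $(\Xi_t)_{t\geq0}\subset\mathbb{R}^{d\times k}$ satisfying, for all $t\geq0$, $U_k^\top\Xi_t=0$ and $\|U_{-k}^\top\Xi_t\|_2\leq 8(\lambda_k-2\sqrt\beta)\varepsilon$, such that the ANPM iterates $(X_t)_{t\geq0}$ on $A$ with momentum $\beta$ and these perturbations satisfy $\tan\theta_k(U_k,X_t)>\varepsilon$ for all $t\geq0$.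
   Context: $\mathrm{St}(d,k):=\{X\in\mathbb{R}^{d\times k}:X^\top X=I_k\}$. For $Y\in\mathbb{R}^{d\times k}$, $\mathrm{QR}(Y)$ is the pair $(X,R)$ with $Y=XR$, $X\in\mathrm{St}(d,k)$, $R$ upper triangular $k\times k$ with nonnegative diagonal (unique, $R$ invertible, when $Y$ has full column rank). For $U,X\in\mathrm{St}(d,k)$, $\theta_k(U,X):=\arccos\sigma_{\min}(U^\top X)\in[0,\pi/2]$. ANPM with momentum $\beta$ and perturbations $(\Xi_t)$: given $X_0\in\mathrm{St}(d,k)$, $(X_1,R_1)=\mathrm{QR}(\tfrac12 AX_0+\Xi_0)$, and for $t\geq1$, $Y_{t+1}=AX_t-\beta X_{t-1}R_t^{-1}+\Xi_t$, $(X_{t+1},R_{t+1})=\mathrm{QR}(Y_{t+1})$. *)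

From HB Require Import structures.
From mathcomp Require Import all_boot all_order all_algebra.
From mathcomp Require Import all_classical all_reals all_analysis.
Set Implicit Arguments. Unset Strict Implicit. Unset Printing Implicit Defensive.
Import Order.TTheory GRing.Theory Num.Theory.
Local Open Scope classical_set_scope.
Local Open Scope ring_scope.

Section Defs.
Variable R : realType.

Definition vnorm n (v : 'cV[R]_n) : R := Num.sqrt (\sum_i v i 0 ^+ 2).

Definition unit_sphere n : set 'cV[R]_n := [set v | vnorm v = 1].

Definition spec_norm m n (M : 'M[R]_(m, n)) : R :=
  sup [set vnorm (M *m v) | v in @unit_sphere n].

Definition sigma_min n (B : 'M[R]_n) : R :=
  inf [set vnorm (B *m v) | v in @unit_sphere n].

Definition stiefel d k (X : 'M[R]_(d, k)) : Prop := X^T *m X = 1%:M.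

Definition theta_k d k (U X : 'M[R]_(d, k)) : R := acos (sigma_min (U^T *m X)).

Definition tan_ext (x : R) : \bar R :=
  if cos x == 0 then +oo%E else (tan x)%:E.

Definition upper_tri_nonneg k (Rm : 'M[R]_k) : Prop :=
  (forall i j : 'I_k, (j < i)%N -> Rm i j = 0) /\ (forall i : 'I_k, 0 <= Rm i i).

(* (X, Rm) = QR(Y) with Y of full column rank (Rm invertible): this pair is unique *)
Definition is_QR d k (Y X : 'M[R]_(d, k)) (Rm : 'M[R]_k) : Prop :=
  [/\ stiefel X, upper_tri_nonneg Rm, Rm \in unitmx & Y = X *m Rm].

Definition ANPM d k (A : 'M[R]_d) (beta : R) (Xi : nat -> 'M[R]_(d, k))
    (X : nat -> 'M[R]_(d, k)) (Rs : nat -> 'M[R]_k) : Prop :=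
  stiefel (X 0%N) /\
  is_QR ((2%:R)^-1 *: (A *m X 0%N) + Xi 0%N) (X 1%N) (Rs 1%N) /\
  forall t : nat, (1 <= t)%N ->
    is_QR (A *m X t - beta *: (X t.-1 *m invmx (Rs t)) + Xi t) (X t.+1) (Rs t.+1).

Definition A_diag d k (lam beta : R) : 'M[R]_d :=
  \matrix_(i, j) if i == j then (if (i < k)%N then lam else 2 * Num.sqrt beta) else 0.

Definition U_top d k : 'M[R]_(d, k) := \matrix_(i, j) ((i : nat) == j)%:R.
Definition U_bot d k : 'M[R]_(d, d - k) := \matrix_(i, j) ((i : nat) == k + j)%:R.

End Defs.

(* Tilt the last column of U_k towards e_d: X := U_k with e_k replaced by
   c e_k + eps e_d, where c = sqrt (1 - eps^2), so that tan theta_k (U_k, X)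
   = eps / c > eps.  Then A X = lam X + (2 sqrt beta - lam) eps e_d e_k^T, and
   the perturbation -(2 sqrt beta - lam) eps e_d e_k^T (halved at t = 0), which
   lies in the range of U_{-k}, cancels the second term.  Every Y_(t+1) is then
   r_(t+1) X with r_1 = lam / 2 and r_(t+1) = lam - beta / r_t > sqrt beta > 0,
   so QR returns X again: the iterates never move. *)

From HB Require Import structures.
From mathcomp Require Import all_boot all_order all_algebra.
From mathcomp Require Import all_classical all_reals all_analysis.
From mathcomp Require Import zify ring lra.
Import Order.TTheory GRing.Theory Num.Theory.
Local Open Scope ring_scope.

Lemma sum_nat_indicator {R : ringType} {n} (g : 'I_n -> R) {m} (lt_mn : (m < n)%N) :
  \sum_(l < n) ((l : nat) == m)%:R * g l = g (Ordinal lt_mn).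
Proof.
rewrite (bigD1 (Ordinal lt_mn)) //= eqxx mul1r big1 ?addr0 // => l neq_l.
by case: eqP => [eq_lm|]; [case/eqP: neq_l; apply/val_inj | rewrite mul0r].
Qed.

Section EuclideanNorm.
Variable R : realType.

Lemma unit_sphere_sumsq n (v : 'cV[R]_n) : unit_sphere v -> \sum_i v i 0 ^+ 2 = 1.
Proof.
rewrite /unit_sphere /vnorm /= => norm_v.
by rewrite -[LHS]sqr_sqrtr ?norm_v ?expr1n // sumr_ge0 // => i _; rewrite sqr_ge0.
Qed.

Lemma unit_sphere_coord_le1 n (v : 'cV[R]_n) i : unit_sphere v -> `|v i 0| <= 1.
Proof.
move/unit_sphere_sumsq => sum_v.
rewrite -(ler_pXn2r (n := 2)) ?nnegrE // real_normK ?num_real // expr1n -sum_v.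
by rewrite (bigD1 i) //= lerDl sumr_ge0 // => j _; rewrite sqr_ge0.
Qed.

Lemma vnorm_scale_delta n (x : R) (i : 'I_n) : vnorm (x *: delta_mx i 0) = `|x|.
Proof.
rewrite /vnorm (bigD1 i) //= big1 ?addr0 => [|j /negbTE neq_ji].
  by rewrite !mxE !eqxx mulr1 sqrtr_sqr.
by rewrite !mxE neq_ji mulr0 expr0n.
Qed.

Lemma unit_sphere_delta n (i : 'I_n) : unit_sphere (delta_mx i 0 : 'cV[R]_n).
Proof. by rewrite /unit_sphere /= -[delta_mx _ _]scale1r vnorm_scale_delta normr1. Qed.

Lemma sigma_min_diag n (w : 'rV[R]_n) (i0 : 'I_n) :
  (forall i, `|w 0 i0| <= `|w 0 i|) -> sigma_min (diag_mx w) = `|w 0 i0|.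
Proof.
move=> w_min; pose e : 'cV[R]_n := delta_mx i0 0.
have diag_e : diag_mx w *m e = w 0 i0 *: e.
  apply/matrixP => i j; rewrite mul_diag_mx !mxE.
  by case: eqP => [->|]; rewrite ?mulr0 ?mulr1.
apply/le_anti/andP; split.
  apply: ge_inf; first by exists 0 => _ [v _ <-]; rewrite sqrtr_ge0.
  by exists e; [exact: unit_sphere_delta | rewrite diag_e vnorm_scale_delta].
apply: lb_le_inf.
  by exists (vnorm (diag_mx w *m e)), e; first exact: unit_sphere_delta.
move=> _ [v /unit_sphere_sumsq sum_v <-].
rewrite /vnorm -sqrtr_sqr ler_sqrt ?sumr_ge0 // => [|i _]; last exact: sqr_ge0.
rewrite -[_ ^+ 2]mulr1 -sum_v mulr_sumr; apply: ler_sum => i _.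
rewrite mul_diag_mx mxE exprMn ler_wpM2r ?sqr_ge0 //.
rewrite -(real_normK (num_real (w 0 i0))) -(real_normK (num_real (w 0 i))).
by rewrite lerXn2r ?nnegrE.
Qed.

Lemma spec_norm_scale_delta_le m n (a : R) (i : 'I_m) (j : 'I_n) :
  spec_norm (a *: delta_mx i j) <= `|a|.
Proof.
have mulE (v : 'cV[R]_n) : a *: delta_mx i j *m v = (a * v j 0) *: delta_mx i 0.
  apply/matrixP => r c; rewrite -scalemxAl !mxE (bigD1 j) //= big1 ?addr0.
    by rewrite !mxE [c]ord1 !eqxx !andbT mulrA mulrAC.
  by move=> l /negbTE neq_lj; rewrite mxE neq_lj andbF mul0r.
apply: ge_sup; first exists (vnorm (a *: delta_mx i j *m delta_mx j 0)).
  by exists (delta_mx j 0); first exact: unit_sphere_delta.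
move=> _ [v unit_v <-]; rewrite mulE vnorm_scale_delta normrM.
by rewrite ler_piMr ?normr_ge0 ?unit_sphere_coord_le1.
Qed.

End EuclideanNorm.

(* [anpm_scale lam beta 0] is a dummy value: [R_0] does not occur in ANPM. *)
Fixpoint anpm_scale {R : realType} (lam beta : R) (t : nat) : R :=
  match t with
  | 0 => 1
  | 1 => lam / 2
  | (_.+1 as t').+1 => lam - beta / anpm_scale lam beta t'
  end.

Section StationaryIterates.
Variables (R : realType) (d k : nat).

Lemma is_QR_scale (X : 'M[R]_(d, k)) (r : R) : stiefel X -> 0 < r ->
  is_QR (r *: X) X r%:M.
Proof.
move=> st_X r_gt0; split => //.
- split=> [i j lt_ji|i]; rewrite mxE; last by rewrite eqxx mulr1n ltW.
  by case: eqP lt_ji => // ->; rewrite ltnn.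
- by rewrite unitmxE det_scalar unitrX // unitfE gt_eqF.
- by rewrite mul_mx_scalar.
Qed.

Lemma anpm_scale_gt_sqrt (lam beta : R) : 0 < beta -> 2 * Num.sqrt beta < lam ->
  forall t, Num.sqrt beta < anpm_scale lam beta t.+1.
Proof.
move=> beta_gt0 lam_gt; have sqrt_gt0 : 0 < Num.sqrt beta by rewrite sqrtr_gt0.
elim=> [|t IHt] /=; first lra.
have r_gt0 : 0 < anpm_scale lam beta t.+1 by apply: lt_trans IHt.
suff : beta / anpm_scale lam beta t.+1 < Num.sqrt beta by lra.
by rewrite ltr_pdivrMr // -{1}(sqr_sqrtr (ltW beta_gt0)) ltr_pM2l.
Qed.

Lemma ANPM_stationary (A : 'M[R]_d) (beta lam : R) (X N : 'M[R]_(d, k)) :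
  0 < beta -> 2 * Num.sqrt beta < lam -> stiefel X -> A *m X = lam *: X + N ->
  ANPM A beta (fun t => (if t is 0 then - 2^-1 else -1) *: N) (fun=> X)
    (fun t => (anpm_scale lam beta t)%:M).
Proof.
move=> beta_gt0 lam_gt st_X AX.
have r_gt0 t : 0 < anpm_scale lam beta t.+1.
  exact: le_lt_trans (sqrtr_ge0 beta) (anpm_scale_gt_sqrt _ _ beta_gt0 lam_gt t).
split=> //; split=> [|[//|t] _].
  suff -> : 2^-1 *: (A *m X) + - 2^-1 *: N = anpm_scale lam beta 1 *: X.
    exact: is_QR_scale.
  by rewrite AX scalerDr scalerA scaleNr addrK mulrC.
suff -> : A *m X - beta *: (X *m invmx (anpm_scale lam beta t.+1)%:M) + -1 *: N =
    anpm_scale lam beta t.+2 *: X by exact: is_QR_scale.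
by rewrite AX invmx_scalar mul_mx_scalar scalerA scaleN1r addrAC addrK scalerBl.
Qed.

End StationaryIterates.

Lemma A_diag_mulE {R : realType} {d k n} (lam beta : R) (M : 'M[R]_(d, n)) i j :
  (A_diag d k lam beta *m M) i j =
  (if (i < k)%N then lam else 2 * Num.sqrt beta) * M i j.
Proof.
rewrite mxE (bigD1 i) //= mxE eqxx big1 ?addr0 // => l /negbTE neq_li.
by rewrite mxE eq_sym neq_li mul0r.
Qed.

Lemma tr_U_top_mulE {R : realType} {d k n} (le_kd : (k <= d)%N) (M : 'M[R]_(d, n)) i j :
  ((U_top R d k)^T *m M) i j = M (widen_ord le_kd i) j.
Proof.
rewrite mxE; under eq_bigr => l _ do rewrite !mxE.
rewrite (sum_nat_indicator (M^~ j) (leq_trans (ltn_ord i) le_kd)).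
by congr (M _ j); apply: val_inj.
Qed.

Fact U_bot_row_subproof {d k} (i : 'I_(d - k)) : (k + i < d)%N.
Proof. by have := ltn_ord i; lia. Qed.

Lemma tr_U_bot_mulE {R : realType} {d k n} (M : 'M[R]_(d, n)) i j :
  ((U_bot R d k)^T *m M) i j = M (Ordinal (U_bot_row_subproof i)) j.
Proof.
rewrite mxE; under eq_bigr => l _ do rewrite !mxE.
by rewrite (sum_nat_indicator (M^~ j) (U_bot_row_subproof i)).
Qed.

Section TiltedFrame.
Variables (R : realType) (d k : nat).
Hypotheses (k_gt0 : (0 < k)%N) (k_lt_d : (k < d)%N).

Fact last_col_subproof : (k.-1 < k)%N. Proof. by rewrite ltn_predL. Qed.
Fact last_row_subproof : (d.-1 < d)%N. Proof. by rewrite ltn_predL (ltn_trans k_gt0). Qed.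
Fact corner_row_subproof : (d.-1 - k < d - k)%N. Proof. lia. Qed.

Definition last_col : 'I_k := Ordinal last_col_subproof.

(* [U_k] with its last column [e_k] replaced by [c e_k + s e_d]. *)
Definition tilted_frame (c s : R) : 'M[R]_(d, k) :=
  \matrix_(l, j) if (j : nat) == k.-1
                 then c * ((l : nat) == k.-1)%:R + s * ((l : nat) == d.-1)%:R
                 else ((l : nat) == j)%:R.

Definition corner : 'M[R]_(d, k) := delta_mx (Ordinal last_row_subproof) last_col.

Lemma tilted_frame_stiefel (c s : R) : c ^+ 2 + s ^+ 2 = 1 -> stiefel (tilted_frame c s).
Proof.
move=> cs1; apply/matrixP => i j; rewrite !mxE.
under eq_bigr => l _ do rewrite [_^T _ _]mxE [tilted_frame _ _ l i]mxE.
have lt_ik := ltn_ord i; have lt_jk := ltn_ord j.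
case: (eqVneq (i : nat) k.-1) => [i_last|i_nlast]; last first.
  rewrite (sum_nat_indicator ((tilted_frame c s)^~ j) (ltn_trans lt_ik k_lt_d)) mxE /=.
  case: eqP => [j_last|_]; last by [].
  have [-> ->] : ((i : nat) == k.-1) = false /\ ((i : nat) == d.-1) = false.
    by split; apply/eqP; lia.
  have -> : (i == j) = false by apply/eqP => eq_ij; rewrite eq_ij j_last eqxx in i_nlast.
  by rewrite !mulr0 addr0.
under eq_bigr => l _ do rewrite mulrDl -!mulrA.
rewrite big_split /= -!mulr_sumr.
rewrite (sum_nat_indicator ((tilted_frame c s)^~ j) (ltn_trans last_col_subproof k_lt_d)).
rewrite (sum_nat_indicator ((tilted_frame c s)^~ j) last_row_subproof) !mxE /=.
have [-> ->] : (k.-1 == d.-1) = false /\ (d.-1 == k.-1) = false by split; apply/eqP; lia.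
case: (eqVneq (j : nat) k.-1) => [j_last|j_nlast].
  have -> : i = j by apply/val_inj; rewrite /= i_last j_last.
  by rewrite !eqxx !mulr0 addr0 add0r !mulr1 -!expr2.
have -> : (i == j) = false by apply/eqP => eq_ij; rewrite -eq_ij i_last eqxx in j_nlast.
have -> : (d.-1 == j) = false by apply/eqP; lia.
by rewrite !mulr0 addr0.
Qed.

Lemma tr_U_top_tilted_frame (c s : R) :
  (U_top R d k)^T *m tilted_frame c s =
  diag_mx (\row_j if (j : nat) == k.-1 then c else 1).
Proof.
apply/matrixP => i j; rewrite (tr_U_top_mulE (ltnW k_lt_d)) !mxE /=.
have -> : ((i : nat) == d.-1) = false by apply/eqP; have := ltn_ord i; lia.
rewrite mulr0 addr0; case: (eqVneq i j) => [<-|neq_ij].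
  by case: eqP; rewrite ?mulr1 ?eqxx.
have /negbTE neq_ij_nat : (i : nat) != j by [].
rewrite mulr0n; case: eqP => [j_last|_]; last by rewrite neq_ij_nat.
by rewrite -j_last neq_ij_nat mulr0.
Qed.

Lemma tr_U_top_corner : (U_top R d k)^T *m corner = 0.
Proof.
apply/matrixP => i j; rewrite (tr_U_top_mulE (ltnW k_lt_d)) !mxE /=.
suff -> : (widen_ord (ltnW k_lt_d) i == Ordinal last_row_subproof) = false by [].
by rewrite -val_eqE /=; apply/eqP; have := ltn_ord i; lia.
Qed.

Lemma tr_U_bot_corner :
  (U_bot R d k)^T *m corner = delta_mx (Ordinal corner_row_subproof) last_col.
Proof.
apply/matrixP => i j; rewrite tr_U_bot_mulE !mxE /=.
suff -> : (Ordinal (U_bot_row_subproof i) == Ordinal last_row_subproof) =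
          (i == Ordinal corner_row_subproof) by [].
by rewrite -!val_eqE /=; apply/eqP/eqP; have := ltn_ord i; lia.
Qed.

Lemma A_diag_tilted_frame (lam beta c s : R) :
  A_diag d k lam beta *m tilted_frame c s =
  lam *: tilted_frame c s + ((2 * Num.sqrt beta - lam) * s) *: corner.
Proof.
apply/matrixP => l j; rewrite A_diag_mulE !mxE -!val_eqE /=.
have lt_jk := ltn_ord j.
case: ltnP => [lt_lk|le_kl].
  have -> : ((l : nat) == d.-1) = false by apply/eqP; lia.
  by rewrite andFb mulr0n !mulr0 !addr0.
have [-> ->] : ((l : nat) == k.-1) = false /\ ((l : nat) == j) = false.
  by split; apply/eqP; lia.
by case: eqP; case: eqP => _ _ /=; rewrite ?mulr1n ?mulr0n; ring.
Qed.

Lemma theta_tilted_frame (c s : R) :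
  0 < c <= 1 -> theta_k (U_top R d k) (tilted_frame c s) = acos c.
Proof.
case/andP => c_gt0 c_le1.
rewrite /theta_k tr_U_top_tilted_frame (@sigma_min_diag _ _ _ last_col).
  by rewrite mxE eqxx gtr0_norm.
by move=> i; rewrite !mxE eqxx; case: ifP; rewrite // gtr0_norm // normr1.
Qed.

Lemma spec_norm_tr_U_bot_corner_le (a : R) :
  spec_norm ((U_bot R d k)^T *m (a *: corner)) <= `|a|.
Proof. by rewrite -scalemxAr tr_U_bot_corner spec_norm_scale_delta_le. Qed.

End TiltedFrame.

Lemma tan_ext_acos (R : realType) (c : R) :
  0 < c <= 1 -> tan_ext (acos c) = (Num.sqrt (1 - c ^+ 2) / c)%:E.
Proof.
case/andP => c_gt0 c_le1; have c_in : -1 <= c <= 1 by apply/andP; split; lra.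
by rewrite /tan_ext /tan sin_acos // acosK ?in_itv //= gt_eqF.
Qed.

Theorem theorem3 (R : realType) (d k : nat) (beta lam eps : R) :
  (1 <= k)%N -> (k < d)%N -> 0 < beta -> 2 * Num.sqrt beta < lam ->
  0 < eps -> eps < 1 ->
  exists (Xi : nat -> 'M[R]_(d, k)) (X : nat -> 'M[R]_(d, k)) (Rs : nat -> 'M[R]_k),
    [/\ 0 < cos (theta_k (U_top R d k) (X 0%N)),
        (forall t, (U_top R d k)^T *m Xi t = 0),
        (forall t, spec_norm ((U_bot R d k)^T *m Xi t)
                     <= 8%:R * (lam - 2 * Num.sqrt beta) * eps),
        ANPM (A_diag d k lam beta) beta Xi X Rs
      & forall t, (eps%:E < tan_ext (theta_k (U_top R d k) (X t)))%E].
Proof.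
move=> k_gt0 k_lt_d beta_gt0 lam_gt eps_gt0 eps_lt1.
pose c := Num.sqrt (1 - eps ^+ 2).
have c_sqr : c ^+ 2 = 1 - eps ^+ 2 by rewrite sqr_sqrtr //; nra.
have c_gt0 : 0 < c by rewrite sqrtr_gt0; nra.
have c_lt1 : c < 1 by rewrite -sqrtr1 ltr_sqrt //; nra.
pose X := tilted_frame R d k c eps.
have theta_X : theta_k (U_top R d k) X = acos c.
  by rewrite theta_tilted_frame // c_gt0 ltW.
pose a := (2 * Num.sqrt beta - lam) * eps.
pose coef t : R := if t is 0 then - 2^-1 else -1.
exists (fun t => coef t *: (a *: corner R d k k_gt0 k_lt_d)), (fun=> X).
exists (fun t => (anpm_scale lam beta t)%:M); split.
- by rewrite theta_X acosK // in_itv /=; apply/andP; split; lra.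
- by move=> t; rewrite -!scalemxAr tr_U_top_corner !scaler0.
- move=> t; rewrite scalerA.
  apply: le_trans; first exact: spec_norm_tr_U_bot_corner_le.
  have coef_le1 : `|coef t| <= 1.
    by case: t => [|t]; rewrite normrN ?normr1 // normfV normr_nat invf_le1 ?ler1n.
  have gap_ge0 : 0 <= (lam - 2 * Num.sqrt beta) * eps by apply: mulr_ge0; lra.
  rewrite normrM -[`|a|]normrN /a -mulNr opprB [`|_ * eps|]ger0_norm //.
  apply: le_trans (ler_piMl gap_ge0 coef_le1) _.
  by rewrite -mulrA ler_peMl ?ler1n.
- rewrite /coef; apply: ANPM_stationary => //; last exact: A_diag_tilted_frame.
  by apply: tilted_frame_stiefel => //; rewrite c_sqr subrK.
- move=> t; rewrite theta_X tan_ext_acos ?c_gt0 ?ltW // lte_fin c_sqr.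
  by rewrite opprB addrCA subrr addr0 sqrtr_sqr gtr0_norm // ltr_pdivlMr //; nra.
Qed.
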